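(* For every $m\ge 1$ there is a market with $m$ items and $m+1$ unit-demand buyers whose maximum social welfare is $m+o(1)$ (as $m\to\infty$) such that: for some fixed selling order of the items there exists a subgame perfect equilibrium of the sequential first-price auction with revenue $1$, while for a different fixed selling order every subgame perfect equilibrium has revenue at least $m$.
   Context: Unit demand: buyer $i$ has values $v_{i,j}\ge0$ and $v_i(S)=\max_{j\in S}v_{i,j}$, $v_i(\emptyset)=0$; utility is quasi-linear. In a sequential first-price auction the items are sold one at a time in the given selling order, each by a sealed-bid first-price auction without reserve price: each buyer submits a nonnegative bid, a highest bidder wins (ties broken by a seller-chosen rule) and pays his bid. Full information. A subgame perfect equilibrium is a (pure) strategy profile that is a Nash equilibrium in every subgame; its revenue is the total payment on the equilibrium path. Social welfare is the sum of buyers' values for their bundles. *)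

From HB Require Import structures.
From mathcomp Require Import all_boot all_order all_algebra all_fingroup.
From mathcomp Require Import reals.
Set Implicit Arguments. Unset Strict Implicit. Unset Printing Implicit Defensive.
Import Order.TTheory GRing.Theory Num.Theory.
Local Open Scope ring_scope.

(* Sequential first-price auctions with unit-demand buyers, full information.
   Buyers are 'I_n, items are 'I_m.  Stage k (k < m) sells item (sigma k). *)
Section SeqAuction.
Variables (R : realType) (n m : nat).

Definition profile := {ffun 'I_n -> R}.
(* a history = the bid profiles of all previous stages (full information) *)
Definition history := seq profile.
Definition strategy := history -> R.
Definition nonneg_strategy (f : strategy) := forall h, 0 <= f h.
Definition nonneg_history (h : history) := all (fun b : profile => [forall i, 0 <= b i]) h.

(* seller-chosen tie-breaking rule: picks a highest bidder (may depend on history) *)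
Definition tie_rule := history -> profile -> 'I_n.
Definition valid_tie (t : tie_rule) := forall h (b : profile) j, b j <= b (t h b).

Definition bids_at (s : 'I_n -> strategy) (h : history) : profile := [ffun i => s i h].

Fixpoint run (s : 'I_n -> strategy) (k : nat) (h : history) : history :=
  if k is k'.+1 then run s k' (rcons h (bids_at s h)) else h.

Definition play (s : 'I_n -> strategy) (h : history) : history := run s (m - size h) h.

Definition update (s : 'I_n -> strategy) (i : 'I_n) (d : strategy) : 'I_n -> strategy :=
  fun j => if j == i then d else s j.

Variables (v : 'I_n -> 'I_m -> R) (sigma : {perm 'I_m}) (t : tie_rule).

Definition bidk (H : history) (k : 'I_m) : profile := nth [ffun=> 0] H k.
Definition winner (H : history) (k : 'I_m) : 'I_n := t (take k H) (bidk H k).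
Definition price (H : history) (k : 'I_m) : R := bidk H k (winner H k).

(* unit-demand value of the bundle won by i, payment, quasi-linear utility *)
Definition bundle_value (H : history) (i : 'I_n) : R :=
  \big[Num.max/0]_(k < m | winner H k == i) v i (sigma k).
Definition payment (H : history) (i : 'I_n) : R :=
  \sum_(k < m | winner H k == i) price H k.
Definition utility (H : history) (i : 'I_n) : R := bundle_value H i - payment H i.
Definition revenue (H : history) : R := \sum_(k < m) price H k.

Definition SPE (s : 'I_n -> strategy) : Prop :=
  (forall i, nonneg_strategy (s i)) /\
  forall h : history, nonneg_history h -> (size h < m)%N ->
  forall (i : 'I_n) (d : strategy), nonneg_strategy d ->
    utility (play (update s i d) h) i <= utility (play s h) i.

Definition eq_revenue (s : 'I_n -> strategy) : R := revenue (play s [::]).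

End SeqAuction.

Section Welfare.
Variables (R : realType) (n m : nat) (v : 'I_n -> 'I_m -> R).
(* social welfare of an allocation of all items (values are >= 0, so
   leaving items unallocated never helps) *)
Definition alloc_welfare (a : {ffun 'I_m -> 'I_n}) : R :=
  \sum_(i < n) \big[Num.max/0]_(j < m | a j == i) v i j.
Definition opt_welfare : R := \big[Num.max/0]_(a : {ffun 'I_m -> 'I_n}) alloc_welfare a.
End Welfare.

From HB Require Import structures.
From mathcomp Require Import all_boot all_order all_algebra all_fingroup.
From mathcomp Require Import reals.
From mathcomp Require Import lra zify.
Set Implicit Arguments. Unset Strict Implicit. Unset Printing Implicit Defensive.
Import Order.TTheory GRing.Theory Num.Theory.
Local Open Scope ring_scope.

(* The market has m "flat" buyers valuing every item at 1 and one single-minded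
   buyer valuing only item 0, at 1; its optimal welfare is m.

   A buyer who has won nothing before stage l can deviate by overbidding the
   price of stage l and bidding 0 afterwards, so in any subgame perfect
   equilibrium his utility is at least his value for item l minus its price.
   If item 0 is sold last, this forces every price to be at least 1: either
   some flat buyer wins nothing, or the flat buyers win one item each; then the
   single-minded buyer, who wins nothing, forces the last price up to 1, so the
   flat winner of the last item has utility at most 0, which in turn forces all
   earlier prices up to 1.

   If item 0 is sold first, the single-minded buyer and one flat buyer bid 1 on
   it, and the m - 1 remaining flat buyers then receive the m - 1 remaining items
   for free, the seller breaking ties towards buyers without an item. Off the
   path, the flat buyers without an item bid 1 as long as they outnumber the
   items left. Along this profile the continuation utility is the explicit
   potential [partial_utility + future_gain], which no single-stage deviation
   increases, and the one-shot deviation principle gives subgame perfection. *)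

(** * Plays of a strategy profile *)

Section Plays.
Variables (R : realType) (n m : nat).
Implicit Types (s : 'I_n -> strategy R n) (h : history R n).

Definition extend s h : history R n := rcons h (bids_at s h).

Lemma run_iter s j h : run s j h = iter j (extend s) h.
Proof. by elim: j h => [|j IH] h //=; rewrite IH -iterSr. Qed.

Lemma size_iter_extend s j h : size (iter j (extend s) h) = (size h + j)%N.
Proof. by elim: j => [|j IH]; rewrite ?addn0 //= size_rcons IH addnS. Qed.

Lemma iter_extend_prefix s j h : exists e, iter j (extend s) h = h ++ e.
Proof.
elim: j => [|j [e IH]]; first by exists [::]; rewrite cats0.
by exists (rcons e (bids_at s (h ++ e))); rewrite /= IH /extend rcons_cat.
Qed.

Lemma take_iter_extend s j h : take (size h) (iter j (extend s) h) = h.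
Proof. by have [e ->] := iter_extend_prefix s j h; rewrite take_size_cat. Qed.

Lemma nth_iter_extend s j h l : (size h <= l < size h + j)%N ->
  nth [ffun=> 0] (iter j (extend s) h) l = bids_at s (take l (iter j (extend s) h)).
Proof.
elim: j h => [|j IH] h /andP[hl lhj]; first by rewrite addn0 ltnNge hl in lhj.
rewrite iterSr; have [->|lh] := eqVneq l (size h).
  have [e ->] := iter_extend_prefix s j (extend s h).
  by rewrite /extend -cats1 -catA nth_cat ltnn subnn take_size_cat.
by rewrite IH // size_rcons ltn_neqAle eq_sym lh hl addSnnS.
Qed.

Lemma playE s h : play m s h = iter (m - size h) (extend s) h.
Proof. exact: run_iter. Qed.

Lemma size_play s h : (size h <= m)%N -> size (play m s h) = m.
Proof. by move=> hm; rewrite playE size_iter_extend subnKC. Qed.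

Lemma play_extend s h : (size h < m)%N -> play m s h = play m s (extend s h).
Proof.
move=> hm; rewrite !playE size_rcons subnS.
by case: (m - size h)%N (subn_gt0 (size h) m) => [|j]; rewrite ?hm // iterSr.
Qed.

Lemma play_nil_take s j : (j <= m)%N ->
  play m s (take j (play m s [::])) = play m s [::].
Proof.
move=> jm; have tk : take j (play m s [::]) = iter j (extend s) [::].
  rewrite playE subn0 -(subnK jm) iterD.
  have := take_iter_extend s (m - j) (iter j (extend s) [::]).
  by rewrite size_iter_extend.
by rewrite tk !playE size_iter_extend /= subn0 -iterD subnK.
Qed.

Lemma nth_play_nil s l : (l < m)%N ->
  nth [ffun=> 0] (play m s [::]) l = bids_at s (take l (play m s [::])).
Proof. by move=> lm; rewrite playE subn0 nth_iter_extend. Qed.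

End Plays.

(** * Deviations *)

Section WinAt.
Variables (R : realType) (n : nat) (t : tie_rule R n).
Implicit Types (H h : history R n) (b : profile R n).

Definition win_at H (l : nat) : 'I_n := t (take l H) (nth [ffun=> 0] H l).

Lemma win_at_take H j l : (l < j)%N -> win_at (take j H) l = win_at H l.
Proof. by move=> lj; rewrite /win_at take_takel ?nth_take // ltnW. Qed.

Lemma win_at_rcons h b l : (l < size h)%N -> win_at (rcons h b) l = win_at h l.
Proof. by move=> lh; rewrite /win_at nth_rcons lh -cats1 takel_cat // ltnW. Qed.

Lemma win_at_rcons_size h b : win_at (rcons h b) (size h) = t h b.
Proof. by rewrite /win_at nth_rcons ltnn eqxx -cats1 take_size_cat. Qed.

End WinAt.

Section Deviation.
Variables (R : realType) (n m : nat) (v : 'I_n -> 'I_m -> R) (sigma : {perm 'I_m}).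
Variables (t : tie_rule R n) (s : 'I_n -> strategy R n).
Hypothesis tie_ok : valid_tie t.

Definition overbid (k : nat) (x : R) : strategy R n :=
  fun g => if size g == k then x else 0.

Lemma utility_overbid h (k : 'I_m) i x :
  size h = k -> (forall j, j != i -> s j h < x) ->
  (forall l, (l < k)%N -> win_at t h l != i) ->
  v i (sigma k) - x <= utility v sigma t (play m (update s i (overbid k x)) h) i.
Proof.
move=> hk others_lt no_win.
set s' := update s i (overbid k x); set H := play m s' h.
have HE : H = iter (m - k) (extend s') h by rewrite /H playE hk.
have take_H : take k H = h by rewrite HE -{1}hk take_iter_extend.
have bid_H l : (k <= l < m)%N -> nth [ffun=> 0] H l = bids_at s' (take l H).
  by move=> /andP[kl lm]; rewrite HE nth_iter_extend // hk subnKC ?kl // ltnW.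
have win_k : winner t H k = i.
  rewrite /winner /bidk take_H bid_H ?leqnn ?ltn_ord // take_H.
  apply/eqP/negPn/negP => ne.
  have := tie_ok h (bids_at s' h) i.
  rewrite !ffunE /s' /update eqxx (negbTE ne) /overbid hk eqxx.
  by have := others_lt _ ne; lra.
have price_k : price t H k = x.
  rewrite /price win_k /bidk bid_H ?leqnn ?ltn_ord // take_H ffunE /s' /update.
  by rewrite eqxx /overbid hk eqxx.
have pays_x : payment m t H i = x.
  rewrite /payment (bigD1 k) ?win_k //= price_k big1 ?addr0 // => l /andP[/eqP wl lk].
  have [lt_lk|gt_lk|eq_lk] := ltngtP l k.
  - have := no_win l lt_lk; rewrite -take_H win_at_take //.
    by rewrite -[win_at t H l]/(winner t H l) wl eqxx.
  - rewrite /price wl /bidk bid_H; last by rewrite (ltnW gt_lk) ltn_ord.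
    rewrite ffunE /s' /update eqxx.
    by rewrite /overbid size_take size_play ?hk ?ltn_ord ?(gtn_eqF gt_lk) // ltnW.
  - by move: lk; rewrite -(inj_eq val_inj) /= eq_lk eqxx.
rewrite /utility pays_x lerD2r.
by apply: (@le_bigmax_cond _ _ _ 0 k (fun l => winner t H l == i)); rewrite /= win_k.
Qed.

Hypothesis spe : SPE v sigma t s.
Let H := play m s [::].

Lemma SPE_utility_ge (k : 'I_m) i :
  (forall l : 'I_m, (l < k)%N -> winner t H l != i) ->
  v i (sigma k) - price t H k <= utility v sigma t H i.
Proof.
move=> no_win; have [s_ge0 nash] := spe.
have km : (k <= m)%N := ltnW (ltn_ord k).
set h := take k H.
have hk : size h = k by rewrite size_takel // size_play.
have bids_h : bidk H k = bids_at s h by rewrite /bidk nth_play_nil.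
have h_ge0 : nonneg_history h.
  apply/allP => b /(nthP [ffun=> 0]) [l]; rewrite hk => lk <-.
  apply/forallP => j; rewrite nth_take // nth_play_nil ?ffunE; first exact: s_ge0.
  exact: ltn_trans lk (ltn_ord k).
have hH : play m s h = H by rewrite play_nil_take.
apply/ler_addgt0Pr => e e_gt0.
have overbid_ge0 : nonneg_strategy (overbid k (price t H k + e)).
  move=> g; rewrite /overbid; case: ifP => // _.
  by rewrite addr_ge0 ?(ltW e_gt0) // /price bids_h ffunE s_ge0.
have hm : (size h < m)%N by rewrite hk.
have := nash h h_ge0 hm i _ overbid_ge0; rewrite hH.
move=> deviation_le; rewrite -lerBlDr -addrA -opprD.
apply: le_trans deviation_le; apply: utility_overbid => //.
- move=> j _; apply: (@le_lt_trans _ _ (price t H k)); last by rewrite ltrDl.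
  by have := tie_ok h (bids_at s h) j; rewrite /price /winner -/h bids_h ffunE.
- move=> l lk; rewrite /h win_at_take //.
  exact: (no_win (Ordinal (ltn_trans lk (ltn_ord k)))).
Qed.

End Deviation.

Lemma SPE_one_shot (R : realType) n m (v : 'I_n -> 'I_m -> R) sigma t s :
  (forall i, nonneg_strategy (s i)) ->
  (forall h, nonneg_history h -> (size h < m)%N ->
    forall i (b : profile R n), (forall j, j != i -> b j = s j h) -> 0 <= b i ->
    utility v sigma t (play m s (rcons h b)) i <= utility v sigma t (play m s h) i) ->
  SPE v sigma t s.
Proof.
move=> s_ge0 one_shot; split=> // h h_ge0 hm i d d_ge0.
move ej: (m - size h)%N => j; elim: j h h_ge0 hm ej => [|j IH] h h_ge0 hm ej.
  by move/eqP: ej; rewrite subn_eq0 leqNgt hm.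
set s' := update s i d; set b := bids_at s' h.
have b_others j' : j' != i -> b j' = s j' h by rewrite ffunE /s' /update => /negbTE ->.
have b_ge0 : 0 <= b i by rewrite ffunE /s' /update eqxx.
rewrite (play_extend s' hm); apply: le_trans (one_shot h h_ge0 hm i b b_others b_ge0).
have [hbm|] := ltnP (size (rcons h b)) m; last first.
  by rewrite -subn_eq0 => /eqP mh; rewrite !playE mh.
apply: IH => //; last by rewrite size_rcons subnS ej.
rewrite /nonneg_history all_rcons; apply/andP; split=> //; apply/forallP => j'.
by have [->//|j'i] := eqVneq j' i; rewrite b_others // s_ge0.
Qed.

Lemma utility_no_win (R : realType) n m (v : 'I_n -> 'I_m -> R) sigma t H i :
  (forall l : 'I_m, winner t H l != i) -> utility v sigma t H i = 0.
Proof.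
by move=> no_win; rewrite /utility /bundle_value /payment !big_pred0 ?subr0 // => l;
  apply/negbTE.
Qed.

(** * The market *)

Lemma ord_cover_unique (T : eqType) m (f g : 'I_m -> T) :
  injective g -> (forall c, exists l, f l = g c) ->
  forall l, exists2 c, f l = g c & forall l', f l' = g c -> l' = l.
Proof.
move=> g_inj cover.
have coverb c : exists l, f l == g c by have [l fl] := cover c; exists l; rewrite fl.
pose hit c := xchoose (coverb c).
have hitP c : f (hit c) = g c by apply/eqP; exact: (xchooseP (coverb c)).
have hit_inj : injective hit by move=> a b e; apply: g_inj; rewrite -!hitP e.
have hit_onto l' : exists c, l' = hit c.
  by have /codomP[c ->] := inj_card_onto hit_inj (leqnn _) l'; exists c.
move=> l; have [c ->] := hit_onto l; exists c => // l' /eqP.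
by have [c' ->] := hit_onto l'; rewrite hitP (inj_eq g_inj) => /eqP ->.
Qed.

Lemma bigmax_le_sum (R : realDomainType) (I : finType) (P : pred I) (F : I -> R) :
  (forall j, 0 <= F j) -> \big[Num.max/0]_(j | P j) F j <= \sum_(j | P j) F j.
Proof.
move=> F_ge0; apply: bigmax_le => [|j Pj]; first exact: sumr_ge0.
by rewrite (bigD1 j) //= lerDl sumr_ge0.
Qed.

Section Market.
Variables (R : realType) (k : nat).
Local Notation m := k.+1.
Local Notation n := k.+2.

Definition market : 'I_n -> 'I_m -> R :=
  fun i j => if i == ord_max then (j == ord0)%:R else 1.

Definition flat (c : 'I_m) : 'I_n := widen_ord (leqnSn _) c.

Lemma flat_inj : injective flat.
Proof. by move=> a b /(congr1 val) /= /val_inj. Qed.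

Lemma flat_neq_max c : flat c != ord_max.
Proof. by rewrite -(inj_eq val_inj) /= neq_ltn ltn_ord. Qed.

Lemma market_flat c j : market (flat c) j = 1.
Proof. by rewrite /market (negbTE (flat_neq_max c)). Qed.

Lemma market_ge0 i j : 0 <= market i j.
Proof. by rewrite /market; case: ifP. Qed.

Lemma market_le1 i j : market i j <= 1.
Proof. by rewrite /market; case: ifP => // _; rewrite lern1 leq_b1. Qed.

Lemma alloc_welfare_le (a : {ffun 'I_m -> 'I_n}) : alloc_welfare market a <= m%:R.
Proof.
rewrite /alloc_welfare.
apply: (@le_trans _ _ (\sum_(i < n) \sum_(j | a j == i) market i j)).
  by apply: ler_sum => i _; apply: bigmax_le_sum => j; apply: market_ge0.
have -> : \sum_(i < n) \sum_(j | a j == i) market i j = \sum_(j < m) market (a j) j.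
  rewrite (partition_big a xpredT) //=.
  by apply: eq_bigr => i _; apply: eq_big => [j|j /eqP ->].
rewrite -[m in m%:R]card_ord -sumr_const.
by apply: ler_sum => j _; apply: market_le1.
Qed.

Lemma opt_welfare_market : opt_welfare market = m%:R.
Proof.
apply/le_anti/andP; split; first by apply: bigmax_le => //= a _; apply: alloc_welfare_le.
pose a : {ffun 'I_m -> 'I_n} := [ffun j => flat j].
apply: le_trans (le_bigmax _ _ a); rewrite /alloc_welfare big_ord_recr /=.
rewrite -[m in m%:R]card_ord -sumr_const -[X in X <= _]addr0 lerD //.
  apply: ler_sum => c _; rewrite -(market_flat c c).
  by apply: (@le_bigmax_cond _ _ _ 0 c (fun j => a j == flat c)); rewrite ffunE.
by apply: bigmax_ge_id.
Qed.

Definition rev_order : {perm 'I_m} := perm (@rev_ord_inj m).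

Lemma rev_order_max : rev_order ord_max = ord0.
Proof. by apply/val_inj; rewrite permE /= subnn. Qed.

Lemma rev_order_revenue t s :
  valid_tie t -> SPE market rev_order t s -> m%:R <= eq_revenue m t s.
Proof.
move=> tie_ok spe; set H := play m s [::].
have util_ge := SPE_utility_ge tie_ok spe.
suff price_ge1 (l : 'I_m) : 1 <= price t H l.
  rewrite /eq_revenue /revenue -/H -[m in m%:R]card_ord -sumr_const.
  by apply: ler_sum => l _; apply: price_ge1.
case: (boolP [exists c, [forall l : 'I_m, winner t H l != flat c]]) => [|all_win].
  case/existsP => c /forallP c_loses.
  have := util_ge l (flat c) (fun l' _ => c_loses l').
  by rewrite utility_no_win // market_flat subr_le0.
move: all_win; rewrite negb_exists => /forallP all_win.
have cover c : exists l' : 'I_m, winner t H l' = flat c.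
  by have /existsP[l'] := all_win c; rewrite negbK => /eqP; exists l'.
have unique_winner := ord_cover_unique flat_inj cover.
have max_loses (l' : 'I_m) : winner t H l' != ord_max.
  by have [c -> _] := unique_winner l'; apply: flat_neq_max.
pose L : 'I_m := ord_max.
have price_L : 1 <= price t H L.
  have := util_ge L ord_max (fun l' _ => max_loses l').
  by rewrite utility_no_win // /market eqxx rev_order_max eqxx subr_le0.
have [cL win_L only_L] := unique_winner L.
have util_cL : utility market rev_order t H (flat cL) <= 0.
  have pay_cL : payment m t H (flat cL) = price t H L.
    rewrite /payment (bigD1 L) ?win_L //= big1 ?addr0 // => l' /andP[/eqP wl l'L].
    by move: l'L; rewrite (only_L _ wl) eqxx.
  rewrite /utility pay_cL subr_le0 (le_trans _ price_L) //.
  by apply: bigmax_le => // l' _; apply: market_le1.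
have [->//|lL] := eqVneq l L.
have no_win_before (l' : 'I_m) : (l' < l)%N -> winner t H l' != flat cL.
  move=> l'l; apply/eqP => /only_L l'L.
  by move: l'l; rewrite l'L ltnNge -ltnS ltn_ord.
have := util_ge l (flat cL) no_win_before; rewrite market_flat.
by move/le_trans/(_ util_cL); rewrite subr_le0.
Qed.

End Market.

(** * An equilibrium of revenue 1 when item 0 is sold first *)

Section Equilibrium.
Variables (R : realType) (k : nat).
Local Notation m := k.+1.
Local Notation n := k.+2.
Implicit Types (h : history R n) (b : profile R n).

Definition top_bidder b : 'I_n := [arg max_(j > ord0) b j]%O.

Lemma top_bidderP b j : b j <= b (top_bidder b).
Proof. by rewrite /top_bidder; case: arg_maxP => // i _; apply. Qed.

Definition fresh_top (S : {set 'I_n}) b : 'I_n :=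
  if [pick j | (b (top_bidder b) <= b j) && (j != ord_max) && (j \notin S)] is Some j
  then j else top_bidder b.

Lemma fresh_topP (S : {set 'I_n}) b j : b j <= b (fresh_top S b).
Proof.
rewrite /fresh_top; case: pickP => [j' /andP[/andP[top _] _]|_]; last exact: top_bidderP.
exact: le_trans (top_bidderP b j) top.
Qed.

Lemma fresh_top_fresh (S : {set 'I_n}) b j :
  j != ord_max -> j \notin S -> (forall j', b j' <= b j) ->
  (fresh_top S b != ord_max) && (fresh_top S b \notin S).
Proof.
move=> j_max j_S j_top; rewrite /fresh_top; case: pickP => [j' /andP[/andP[_ ->] ->]//|].
by move=> /(_ j); rewrite j_top j_max j_S.
Qed.

Definition winners h : {set 'I_n} :=
  foldl (fun S b => S :|: [set fresh_top S b]) set0 h.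

Definition fresh_tie : tie_rule R n := fun h b => fresh_top (winners h) b.

Lemma fresh_tie_valid : valid_tie fresh_tie.
Proof. by move=> h b j; apply: fresh_topP. Qed.

Lemma winners_rcons h b : winners (rcons h b) = winners h :|: [set fresh_tie h b].
Proof. by rewrite /winners foldl_rcons. Qed.

Lemma winnersP h i :
  (i \in winners h) = has (fun l => win_at fresh_tie h l == i) (iota 0 (size h)).
Proof.
elim/last_ind: h => [|h b IH]; first by rewrite in_set0.
have -> : iota 0 (size (rcons h b)) = iota 0 (size h) ++ [:: size h].
  by rewrite size_rcons -addn1 iotaD.
rewrite has_cat /= orbF winners_rcons in_setU in_set1 IH.
rewrite win_at_rcons_size eq_sym; congr (_ || _).
by apply: eq_in_has => l; rewrite mem_iota add0n => /win_at_rcons ->.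
Qed.

Definition unserved h : {set 'I_n} := [set j | (j != ord_max) && (j \notin winners h)].

Lemma unserved_nil : unserved [::] = [set~ ord_max].
Proof. by apply/setP => j; rewrite !inE andbT. Qed.

Lemma unserved_rcons h b : unserved (rcons h b) = unserved h :\ fresh_tie h b.
Proof.
apply/setP => j; rewrite !inE winners_rcons !inE negb_or.
by case: (j != ord_max); case: (j \in winners h); case: eqVneq.
Qed.

Definition enough_items h : bool := (#|unserved h| <= m - size h)%N.

Lemma enough_items_rcons h b :
  enough_items (rcons h b) = (#|unserved h :\ fresh_tie h b| <= m - (size h).+1)%N.
Proof. by rewrite /enough_items unserved_rcons size_rcons. Qed.

Definition lowrev_strategy (i : 'I_n) : strategy R n := fun h =>
  if size h == 0%N then ((i == ord0) || (i == ord_max))%:R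
  else ((i \in unserved h) && ~~ enough_items h)%:R.

Lemma lowrev_strategy_ge0 i : nonneg_strategy (lowrev_strategy i).
Proof. by move=> h; rewrite /lowrev_strategy; case: ifP. Qed.

(* Realised value, and value of one more item, under the identity selling order:
   the single-minded buyer only values the item of stage 0. *)
Definition has_item h i : bool :=
  if i != ord_max then i \in winners h else (0 < size h)%N && (win_at fresh_tie h 0 == i).

Definition wants_item h i : bool :=
  if i != ord_max then i \notin winners h else size h == 0%N.

Definition paid h i : R :=
  \sum_(0 <= l < size h | win_at fresh_tie h l == i)
    nth [ffun=> 0] h l (win_at fresh_tie h l).

Definition partial_utility h i : R := (has_item h i)%:R - paid h i.

Definition future_gain h i : R := ((i \in unserved h) && enough_items h)%:R.

Lemma paid_rcons h b i : paid (rcons h b) i = paid h i + (fresh_tie h b == i)%:R * b i.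
Proof.
rewrite /paid size_rcons big_mkcond big_nat_recr //= [in RHS]big_mkcond.
congr (_ + _).
  by apply: eq_big_nat => l /andP[_ lh]; rewrite win_at_rcons // nth_rcons lh.
rewrite win_at_rcons_size nth_rcons ltnn eqxx.
by case: eqP => [->|_]; rewrite ?mul1r ?mul0r.
Qed.

Lemma has_item_rcons h b i :
  has_item (rcons h b) i = has_item h i || ((fresh_tie h b == i) && wants_item h i).
Proof.
rewrite /has_item /wants_item; case: ifP => i_max.
  by rewrite winners_rcons !inE; case: (i \in winners h); case: eqVneq.
case: h => [|b0 h]; first by rewrite /= -[[:: b]]/(rcons [::] b) win_at_rcons_size andbT.
by rewrite win_at_rcons //= andbF orbF.
Qed.

Lemma wants_item_has_no_item h i : wants_item h i -> has_item h i = false.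
Proof. by rewrite /wants_item /has_item; case: ifP => _ => [/negbTE|/eqP->]. Qed.

Lemma partial_utility_rcons h b i : partial_utility (rcons h b) i =
  partial_utility h i + (fresh_tie h b == i)%:R * ((wants_item h i)%:R - b i).
Proof.
rewrite /partial_utility paid_rcons has_item_rcons.
case E: (wants_item h i); first rewrite (wants_item_has_no_item E);
  case: (fresh_tie h b == i); case: (has_item h i) => /=; lra.
Qed.

Lemma lowrev_bids h j : (0 < size h)%N ->
  bids_at lowrev_strategy h j = ((j \in unserved h) && ~~ enough_items h)%:R.
Proof. by move=> h_gt0; rewrite ffunE /lowrev_strategy (negbTE (lt0n_neq0 h_gt0)). Qed.

Lemma fresh_tie_unserved h j : (0 < size h)%N -> j \in unserved h ->
  fresh_tie h (bids_at lowrev_strategy h) \in unserved h.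
Proof.
move=> h_gt0 jU; have := jU; rewrite inE => /andP[j_max j_won].
rewrite inE; apply: (fresh_top_fresh j_max j_won) => j'.
by rewrite !lowrev_bids // jU; case: (enough_items h); case: (j' \in unserved h).
Qed.

Lemma potential_extend h i : (0 < size h)%N -> (size h < m)%N ->
  partial_utility (extend lowrev_strategy h) i +
  future_gain (extend lowrev_strategy h) i =
  partial_utility h i + future_gain h i.
Proof.
move=> h_gt0 hm; rewrite /extend partial_utility_rcons /future_gain.
rewrite enough_items_rcons unserved_rcons in_setD1.
set b := bids_at lowrev_strategy h; set w := fresh_tie h b.
have [U0|[j0 j0U]] := set_0Vmem (unserved h).
  have w_sated : wants_item h w = false.
    rewrite /wants_item; case: ifP => w_max; last by rewrite (negbTE (lt0n_neq0 h_gt0)).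
    have : w \notin unserved h by rewrite U0 inE.
    by rewrite inE w_max /= negbK => ->.
  have b0 j : b j = 0 by rewrite /b lowrev_bids // U0 inE.
  rewrite U0 !inE !andbF /=.
  by have [<-|] := eqVneq w i; rewrite ?w_sated ?b0 /=; lra.
have wU : w \in unserved h by apply: fresh_tie_unserved j0U.
have w_wants : wants_item h w by move: wU; rewrite inE /wants_item => /andP[-> ->].
have card_U : #|unserved h :\ w| = #|unserved h|.-1.
  by rewrite (cardsD1 w (unserved h)) wU.

rewrite card_U /enough_items.
have [enough|short] := leqP #|unserved h| (m - size h).
  have bz j1 : b j1 = 0 by rewrite /b lowrev_bids // /enough_items enough andbF.
  rewrite bz (_ : (_ <= _)%N) ?andbT; last by move: enough; lia.
  have [<-|] := eqVneq w i; rewrite ?w_wants ?wU //=; lra.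
have bw : b w = 1 by rewrite /b lowrev_bids // wU /enough_items leqNgt short.
rewrite (_ : (_ <= _)%N = false) ?andbF; last by apply/negbTE; move: short; lia.
by have [<-|] := eqVneq w i; rewrite ?w_wants ?bw /=; lra.
Qed.

Lemma play_potential h i : (0 < size h)%N -> (size h <= m)%N ->
  partial_utility (play m lowrev_strategy h) i = partial_utility h i + future_gain h i.
Proof.
move=> h_gt0 hm; move ej: (m - size h)%N => j.
elim: j h h_gt0 hm ej => [|j IH] h h_gt0 hm ej.
  rewrite playE ej /future_gain /enough_items ej leqn0 cards_eq0.
  by have [->|] := eqVneq (unserved h) set0; rewrite ?in_set0 ?andbF /= addr0.
have hm' : (size h < m)%N by rewrite -subn_gt0 ej.
rewrite play_extend // IH; first exact: potential_extend.
- by rewrite size_rcons.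
- by rewrite size_rcons.
- by rewrite size_rcons subnS ej.
Qed.

Lemma utility_market_identity H i : size H = m ->
  utility (@market R k) 1%g fresh_tie H i = partial_utility H i.
Proof.
move=> sH; rewrite /utility /partial_utility; congr (_ - _); last first.
  by rewrite /payment /paid sH big_mkord.
rewrite /bundle_value /has_item sH.
set V := \big[Num.max/0]_(l < m | _) _.
have V_le1 : V <= 1 by apply: bigmax_le => // l _; apply: market_le1.
have value_1 l : winner fresh_tie H l == i -> @market R k i l = 1 -> V = 1.
  move=> wl vl; apply/le_anti; rewrite V_le1 -{1}vl.
  by apply: le_trans (@le_bigmax_cond _ _ _ 0 l _ _ wl); rewrite perm1.
case: ifP => i_max.
  rewrite winnersP sH; case: hasP => [[l]|no_win].
    rewrite mem_iota add0n => lm wl.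
    by apply: (value_1 (Ordinal lm)) => //; rewrite /market (negbTE i_max).
  rewrite /V big_pred0 // => l; apply/negbTE/negP => wl; apply: no_win.
  by exists (nat_of_ord l); rewrite // mem_iota add0n ltn_ord.
move/negbFE/eqP: i_max => i_max.
have [w0|w0] := boolP (win_at fresh_tie H 0 == i).
  by apply: (value_1 ord0) => //; rewrite /market i_max !eqxx.
apply/le_anti; rewrite /V bigmax_ge_id andbT; apply: bigmax_le => // l wl.
rewrite perm1 /market i_max eqxx; case: eqVneq => [l0|//].
by case/negP: w0; rewrite l0 in wl; exact: wl.
Qed.

Lemma potential_deviation h i b : (0 < size h)%N -> (size h < m)%N ->
  (forall j, j != i -> b j = bids_at lowrev_strategy h j) -> 0 <= b i ->
  partial_utility (rcons h b) i + future_gain (rcons h b) i <=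
  partial_utility h i + future_gain h i.
Proof.
move=> h_gt0 hm b_others bi_ge0.
rewrite partial_utility_rcons /future_gain enough_items_rcons unserved_rcons in_setD1.
set w := fresh_tie h b.
have wants_le1 : (wants_item h i)%:R <= 1 :> R by rewrite lern1 leq_b1.
case iU: (i \in unserved h); last first.
  have -> : wants_item h i = false.
    move: iU; rewrite /wants_item inE; case: ifP => _ /=.
      by move/negbT; rewrite negbK => ->.
    by rewrite (negbTE (lt0n_neq0 h_gt0)).
  by rewrite !andbF; case: (w == i); rewrite /=; lra.
have [enough|short] := boolP (enough_items h).
  set g := (_ <= _)%N; have g_le1 : (g%:R <= 1 :> R) by rewrite lern1 leq_b1.
  by case: (eqVneq w i) => [wi|_]; rewrite ?wi ?eqxx /=; lra.
have [j /[!in_setD1] /andP[ji jU]] : exists j, j \in unserved h :\ i.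
  apply/set0Pn; rewrite -card_gt0; move: short; rewrite /enough_items -ltnNge.
  rewrite (cardsD1 i (unserved h)) iU /=.
  by move: hm; set z := size h; set u := #|_|; lia.
have bj : b j = 1 by rewrite b_others // lowrev_bids // jU short.
case: (eqVneq w i) => [wi|wi] /=.
  by have := fresh_tie_valid h b j; rewrite -/w wi bj; lra.
rewrite (_ : (_ <= _)%N = false) ?andbF /=; first lra.
apply/negbTE; move: short; rewrite /enough_items -!ltnNge (cardsD1 w (unserved h)).
by move: hm; set z := size h; set u := #|_ :\ w|; case: (w \in unserved h) => /=; lia.
Qed.

Lemma ord0_neq_max : (ord0 : 'I_n) != ord_max.
Proof. by rewrite -(inj_eq val_inj). Qed.

Lemma lowrev_bids_nil j :
  bids_at lowrev_strategy [::] j = ((j == ord0) || (j == ord_max))%:R.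
Proof. by rewrite ffunE. Qed.

Lemma fresh_tie_nil : fresh_tie [::] (bids_at lowrev_strategy [::]) = ord0.
Proof.
set b0 := bids_at lowrev_strategy [::].
have b0_top j : b0 j <= b0 ord0 by rewrite !lowrev_bids_nil eqxx /= lern1 leq_b1.
have ord0_fresh : ord0 \notin winners [::] by rewrite in_set0.
have /andP[w_max _] := fresh_top_fresh ord0_neq_max ord0_fresh b0_top.
have := fresh_topP (winners [::]) b0 ord0; rewrite -/(fresh_tie [::] b0).
move: w_max; set w := fresh_tie _ _ => w_max.
rewrite !lowrev_bids_nil eqxx (negbTE w_max) orbF.
by have [//|w0] := eqVneq w ord0; rewrite ler_nat.
Qed.

Lemma partial_utility_single b i :
  partial_utility [:: b] i = (fresh_tie [::] b == i)%:R * (1 - b i).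
Proof.
rewrite -[[:: b]]/(rcons [::] b) partial_utility_rcons /wants_item in_set0 /=.
rewrite /partial_utility /paid big_geq // /has_item in_set0 /=.
by case: ifP; rewrite subr0 add0r.
Qed.

Lemma future_gain_single b i : future_gain [:: b] i =
  ((i \in [set~ ord_max] :\ fresh_tie [::] b) && (fresh_tie [::] b != ord_max))%:R.
Proof.
rewrite /future_gain -[[:: b]]/(rcons [::] b) enough_items_rcons.
rewrite unserved_rcons unserved_nil.
congr ((_ && _)%:R); rewrite subn1 /=.
have := cardsD1 (fresh_tie [::] b) [set~ ord_max].
rewrite cardsC1 card_ord !inE; set u := #|_ :\ _|.
by case: (fresh_tie [::] b != ord_max) => /=; lia.
Qed.

Lemma potential_deviation_nil i b :
  (forall j, j != i -> b j = bids_at lowrev_strategy [::] j) -> 0 <= b i ->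
  partial_utility [:: b] i + future_gain [:: b] i <=
  partial_utility [:: bids_at lowrev_strategy [::]] i +
  future_gain [:: bids_at lowrev_strategy [::]] i.
Proof.
move=> b_others bi_ge0.
rewrite !partial_utility_single !future_gain_single fresh_tie_nil ord0_neq_max andbT.
rewrite lowrev_bids_nil; set w := fresh_tie [::] b.
have w_top j := fresh_tie_valid [::] b j; rewrite -/w in w_top.
have [i0|i0] := eqVneq i ord0.
  subst i; have b_max : b ord_max = 1.
    by rewrite b_others ?lowrev_bids_nil ?eqxx ?orbT // eq_sym ord0_neq_max.
  have := w_top ord_max; rewrite b_max !inE eqxx /=.
  have [->|w0] := eqVneq w ord0; first by rewrite /=; lra.
  have [->|w_max] := eqVneq w ord_max; first by rewrite /=; lra.
  by rewrite b_others ?lowrev_bids_nil ?w0 // (negbTE w0) (negbTE w_max) ler10.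
have [i_max|i_max] := eqVneq i ord_max.
  subst i; rewrite !inE eqxx !andbF /=.
  have := w_top ord0; rewrite b_others ?ord0_neq_max // lowrev_bids_nil eqxx /=.
  by have [->|] := eqVneq w ord_max; rewrite /= ?mulr1n ?mulr0n; lra.
rewrite !inE eq_sym (negbTE i0) i_max /=.
have gain_le1 : ((w != ord_max)%:R : R) <= 1 by rewrite lern1 leq_b1.
by have [|_] := eqVneq w i; rewrite /= ?mulr1n ?mulr0n; lra.
Qed.

Lemma utility_play_lowrev h i : (0 < size h)%N -> (size h <= m)%N ->
  utility (@market R k) 1%g fresh_tie (play m lowrev_strategy h) i =
  partial_utility h i + future_gain h i.
Proof.
by move=> h_gt0 hm; rewrite utility_market_identity ?size_play // play_potential.
Qed.

Lemma lowrev_SPE : SPE (@market R k) 1%g fresh_tie lowrev_strategy.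
Proof.
apply: SPE_one_shot => [|h _ hm i b b_others bi_ge0]; first exact: lowrev_strategy_ge0.
have {}b_others j : j != i -> b j = bids_at lowrev_strategy h j.
  by move=> ji; rewrite ffunE b_others.
rewrite utility_play_lowrev ?size_rcons //.
have [/size0nil h0|h_gt0] := posnP (size h).
  move: b_others; rewrite h0 play_extend // utility_play_lowrev // => b_others.
  exact: potential_deviation_nil.
rewrite utility_play_lowrev //; last exact: ltnW.
exact: potential_deviation.
Qed.

Definition partial_revenue h : R :=
  \sum_(0 <= l < size h) nth [ffun=> 0] h l (win_at fresh_tie h l).

Lemma partial_revenue_rcons h b :
  partial_revenue (rcons h b) = partial_revenue h + b (fresh_tie h b).
Proof.
rewrite /partial_revenue size_rcons big_nat_recr //= win_at_rcons_size nth_rcons ltnn.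
rewrite eqxx; congr (_ + _).
by apply: eq_big_nat => l /andP[_ lh]; rewrite win_at_rcons // nth_rcons lh.
Qed.

Lemma partial_revenue_play h : (0 < size h)%N -> (size h <= m)%N -> enough_items h ->
  partial_revenue (play m lowrev_strategy h) = partial_revenue h.
Proof.
move=> h_gt0 hm; move ej: (m - size h)%N => j.
elim: j h h_gt0 hm ej => [|j IH] h h_gt0 hm ej enough; first by rewrite playE ej.
have hm' : (size h < m)%N by rewrite -subn_gt0 ej.
set b := bids_at lowrev_strategy h.
have b0 j' : b j' = 0 by rewrite /b lowrev_bids // enough andbF.
rewrite play_extend // IH; first by rewrite partial_revenue_rcons b0 addr0.
- by rewrite size_rcons.
- by rewrite size_rcons.
- by rewrite size_rcons subnS ej.
rewrite enough_items_rcons.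
have [U0|[j0 j0U]] := set_0Vmem (unserved h); first by rewrite U0 set0D cards0.
have wU := fresh_tie_unserved h_gt0 j0U; rewrite -/b in wU.
move: enough hm'; rewrite /enough_items (cardsD1 (fresh_tie h b) (unserved h)) wU.
by set z := size h; set u := #|_ :\ _|; lia.
Qed.

Lemma lowrev_revenue : eq_revenue m fresh_tie lowrev_strategy = 1.
Proof.
set b0 := bids_at lowrev_strategy [::].
have enough : enough_items [:: b0].
  rewrite -[[:: b0]]/(rcons [::] b0) enough_items_rcons unserved_nil fresh_tie_nil.
  rewrite subn1 /=; have := cardsD1 (ord0 : 'I_n) [set~ ord_max].
  by rewrite cardsC1 card_ord !inE ord0_neq_max /=; set u := #|_ :\ _|; lia.
rewrite /eq_revenue play_extend //.
have sH : size (play m lowrev_strategy (extend lowrev_strategy [::])) = m.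
  by rewrite size_play.
rewrite /revenue -[RHS](_ : partial_revenue [:: b0] = 1).
  by rewrite -partial_revenue_play // /partial_revenue sH big_mkord.
rewrite -[[:: b0]]/(rcons [::] b0) partial_revenue_rcons /partial_revenue big_geq //.
by rewrite add0r fresh_tie_nil lowrev_bids_nil eqxx.
Qed.

End Equilibrium.

Theorem mainTheorem12 (R : realType) :
  exists V : forall k : nat, 'I_k.+2 -> 'I_k.+1 -> R,
    (forall k i j, 0 <= V k i j) /\
    (forall eps : R, 0 < eps -> exists M : nat, forall k : nat, (M <= k)%N ->
        `|opt_welfare (V k) - k.+1%:R| <= eps) /\
    (forall k : nat, exists sigma1 sigma2 : {perm 'I_k.+1},
      (exists t : tie_rule R k.+2, valid_tie t /\
         exists s, SPE (V k) sigma1 t s /\ eq_revenue k.+1 t s = 1) /\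
      (forall t : tie_rule R k.+2, valid_tie t ->
         forall s, SPE (V k) sigma2 t s -> k.+1%:R <= eq_revenue k.+1 t s)).
Proof.
exists (@market R); split; first exact: market_ge0.
split=> [eps eps_gt0|k].
  by exists 0%N => k _; rewrite opt_welfare_market subrr normr0 ltW.
exists 1%g, (rev_order k); split; last by move=> t tie_ok s; apply: rev_order_revenue.
exists (@fresh_tie R k); split; first exact: fresh_tie_valid.
exists (@lowrev_strategy R k); split; [exact: lowrev_SPE | exact: lowrev_revenue].
Qed.
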